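(* For $\nu,\lambda\in\mathbb C$ and integers $0\le k\le n$, \[ d^k_n(\nu)=\sum_{j=0}^{n-k}\binom{n-k}{j}\,d^k_{n-j}(\lambda)\,(\nu-\lambda)^j. \]
   Context: For $\lambda\in\mathbb C$ and integers $0\le k\le n$, define $e^k_n(\lambda)$ by $e^n_n(\lambda)=n!$ and, for $1\le k\le n$, $e^{k-1}_n(\lambda)=e^k_n(\lambda)+(\lambda-1)e^{k-1}_{n-1}(\lambda)$. Put $d^k_n(\lambda)=e^k_n(\lambda)/k!$. *)

(* complex numbers are R[i] = complex R over R : realType
   (mathcomp-real-closed), so that taking R := Stdlib's R gives ℂ. *)
From HB Require Import structures.
From mathcomp Require Import all_boot all_order all_algebra.
From mathcomp Require Import complex reals.
Set Implicit Arguments. Unset Strict Implicit. Unset Printing Implicit Defensive.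
Import Order.TTheory GRing.Theory Num.Theory.
Local Open Scope ring_scope.

(* e_coef l n k  =  e^k_n(l) for 0 <= k <= n, defined literally by
     e^n_n(l) = n!,
     e^{k-1}_n(l) = e^k_n(l) + (l - 1) e^{k-1}_{n-1}(l)   (1 <= k <= n),
   i.e. by recursion on n and, for fixed n, on n - k.
   The inner fixpoint g d computes e^{n-d}_n.  Values for k > n are
   irrelevant (they equal n!). *)
Fixpoint e_coef (R : realType) (l : R[i]) (n : nat) : nat -> R[i] :=
  match n with
  | 0 => fun _ => 1
  | n'.+1 =>
      let prev := e_coef l n' in
      fun k =>
        (fix g (d : nat) : R[i] :=
           match d with
           | 0 => (n'.+1)`!%:R
           | d'.+1 => g d' + (l - 1) * prev (n' - d')%N
           end) (n'.+1 - k)%N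
  end.

Definition d_coef (R : realType) (l : R[i]) (n k : nat) : R[i] :=
  e_coef l n k / (k`!)%:R.

(* Unwinding the recursion gives the closed form
     e^k_n(l) = sum_j C(n-k, j) (n-j)! (l-1)^j,
   since both sides take the value n! on the diagonal and obey the same
   recursion in n and k.  Writing nu - 1 = (l - 1) + (nu - l), the binomial
   expansion of the closed form at nu regroups, by the identity
   C(N, i+j) C(i+j, j) = C(N, j) C(N-j, i), into
   sum_j C(n-k, j) e^k_{n-j}(l) (nu - l)^j; dividing by k! gives the claim. *)

From HB Require Import structures.
From mathcomp Require Import all_boot all_order all_algebra.
From mathcomp Require Import complex reals.
From mathcomp Require Import ring zify.
Set Implicit Arguments.
Unset Strict Implicit.
Unset Printing Implicit Defensive.

Import Order.TTheory GRing.Theory Num.Theory.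
Local Open Scope ring_scope.

Lemma big_ord_widen0 (V : nmodType) (F : nat -> V) m n : (m <= n)%N ->
  (forall i, (m <= i < n)%N -> F i = 0) ->
  \sum_(i < m) F i = \sum_(i < n) F i.
Proof.
move=> le_mn F0; rewrite (big_ord_widen _ _ le_mn) big_mkcond /=.
apply: eq_bigr => i _; case: ifPn; rewrite -?leqNgt => // le_mi.
by rewrite F0 // le_mi /=.
Qed.

Lemma mul_bin_bin N i j :
  ('C(N, i + j) * 'C(i + j, j) = 'C(N, j) * 'C(N - j, i))%N.
Proof.
have [le_ijN | lt_N_ij] := leqP (i + j) N; last first.
  rewrite (@bin_small N (i + j)) //.
  have [le_jN | lt_Nj] := leqP j N; last by rewrite (@bin_small N j).
  by rewrite (@bin_small (N - j) i) ?muln0 //; lia.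
have pos : (0 < i`! * j`! * (N - (i + j))`!)%N by rewrite !muln_gt0 !fact_gt0.
apply/eqP; rewrite -(eqn_pmul2r pos); apply/eqP.
have fN := bin_fact le_ijN.
have fij := bin_fact (leq_addl i j); rewrite addnK in fij.
have fNj := @bin_fact N j (leq_trans (leq_addl i j) le_ijN).
have le_iNj : (i <= N - j)%N by lia.
have fNji := bin_fact le_iNj.
rewrite -subnDA addnC in fNji.
transitivity N`!; [rewrite -fN -fij | rewrite -fNj -fNji]; ring.
Qed.

Definition e_coef_closed {R : comPzRingType} (a : R) n k :=
  \sum_(j < n.+1) ('C(n - k, j))%:R * ((n - j)`!)%:R * a ^+ j.

Section ClosedForm.
Variable R : comPzRingType.
Implicit Type a b : R.

Lemma e_coef_closed_diag a n : e_coef_closed a n n = (n`!)%:R.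
Proof.
rewrite /e_coef_closed big_ord_recl subnn subn0 mulr1 mul1r big1 ?addr0 //.
by move=> j _; rewrite bin0n !mul0r.
Qed.

Lemma e_coef_closedS a n k : (k <= n)%N ->
  e_coef_closed a n.+1 k = e_coef_closed a n.+1 k.+1 + a * e_coef_closed a n k.
Proof.
move=> le_kn; rewrite /e_coef_closed big_ord_recl [X in _ = X + _]big_ord_recl.
rewrite !bin0 -addrA mulr_sumr -big_split /=; congr (_ + _).
apply: eq_bigr => j _; rewrite /bump /= add1n subSn // subSS binS natrD exprS; ring.
Qed.

Lemma e_coef_closed_shift_coef a n k j : (j <= n)%N ->
  \sum_(m < n.+1)
     ('C(n - k, m))%:R * ((n - m)`!)%:R * ('C(m, j))%:R * a ^+ (m - j)
  = ('C(n - k, j))%:R * e_coef_closed a (n - j) k.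
Proof.
move=> le_jn.
rewrite -(big_mkord xpredT (fun m =>
  ('C(n - k, m))%:R * ((n - m)`!)%:R * ('C(m, j))%:R * a ^+ (m - j))).
rewrite (big_cat_nat (leq0n j)) ?leqW //=.
rewrite big1_seq ?add0r; last first.
  move=> m /andP[_]; rewrite mem_index_iota => /andP[_ lt_mj].
  by rewrite (@bin_small m j) // mulr0 !mul0r.
rewrite -{1}[j]add0n big_addn subSn // big_mkord mulr_sumr.
apply: eq_bigr => i _; rewrite addnK.
have -> : (n - (i + j) = n - j - i)%N by lia.
have -> : (n - j - k = n - k - j)%N by lia.
transitivity (('C(n - k, i + j) * 'C(i + j, j))%:R * ((n - j - i)`!)%:R * a ^+ i).
  by rewrite natrM; ring.
by rewrite mul_bin_bin natrM; ring.
Qed.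

Lemma e_coef_closedD a b n k :
  e_coef_closed (a + b) n k =
  \sum_(j < (n - k).+1) ('C(n - k, j))%:R * e_coef_closed a (n - j) k * b ^+ j.
Proof.
pose G m j := ('C(n - k, m))%:R * ((n - m)`!)%:R * ('C(m, j))%:R * a ^+ (m - j)
              * b ^+ j.
have expand (m : 'I_n.+1) :
    ('C(n - k, m))%:R * ((n - m)`!)%:R * (a + b) ^+ m = \sum_(j < n.+1) G m j.
  rewrite exprDn mulr_sumr.
  transitivity (\sum_(j < m.+1) G m j).
    by apply: eq_bigr => j _; rewrite /G -mulr_natr; ring.
  apply: big_ord_widen0 => // j /andP[lt_mj _].
  by rewrite /G (@bin_small m j) // mulr0 !mul0r.
rewrite /e_coef_closed (eq_bigr _ (fun m _ => expand m)) exchange_big /=.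
rewrite (big_ord_widen0 (n := n.+1)
  (F := fun j => ('C(n - k, j))%:R * e_coef_closed a (n - j) k * b ^+ j)).
- apply: eq_bigr => j _; rewrite -mulr_suml e_coef_closed_shift_coef //.
  by rewrite -ltnS.
- by rewrite ltnS leq_subr.
- by move=> j /andP[lt_j _]; rewrite bin_small // !mul0r.
Qed.
End ClosedForm.

Section ECoef.
Variables (R : realType) (l : R[i]).

Lemma e_coefnn n : e_coef l n n = (n`!)%:R.
Proof. by case: n => //= n; rewrite subnn. Qed.

Lemma e_coefS n k : (k <= n)%N ->
  e_coef l n.+1 k = e_coef l n.+1 k.+1 + (l - 1) * e_coef l n k.
Proof. by move=> le_kn; rewrite /= subSn // subSS subKn. Qed.

Lemma e_coefE n k : (k <= n)%N -> e_coef l n k = e_coef_closed (l - 1) n k.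
Proof.
elim: n k => [|n IHn] k.
  by rewrite leqn0 => /eqP->; rewrite e_coefnn e_coef_closed_diag.
move=> le_kn; rewrite -(subKn le_kn).
elim: (n.+1 - k)%N (leq_subr k n.+1) => [|d IHd] le_d.
  by rewrite subn0 e_coefnn e_coef_closed_diag.
have le_ndn : (n - d <= n)%N := leq_subr d n.
rewrite subSS (e_coefS le_ndn) (e_coef_closedS _ le_ndn) -(subSn le_d).
by rewrite (IHd (ltnW le_d)) (IHn _ le_ndn).
Qed.

End ECoef.

Theorem mainTheorem7 (R : realType) (nu l : R[i]) (n k : nat) :
  (k <= n)%N ->
  d_coef nu n k =
  \sum_(j < (n - k).+1)
     ('C(n - k, j))%:R * d_coef l (n - j) k * (nu - l) ^+ j.
Proof.
move=> le_kn; rewrite /d_coef (e_coefE _ le_kn).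
have -> : nu - 1 = (l - 1) + (nu - l) by ring.
rewrite e_coef_closedD mulr_suml; apply: eq_bigr => j _.
have le_k_nj : (k <= n - j)%N by have := ltn_ord j; lia.
rewrite (e_coefE _ le_k_nj); ring.
Qed.
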